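(* Let ${\rm Bin}(m,\theta)$ be a binomially distributed random variable with parameters $m\in\mathbb{N}$ and $\theta\in(0,1)$. Then $${\rm Var}\bigl(({\rm Bin}(m,\theta)-1)_+\bigr)={\rm Var}\bigl({\rm Bin}(m,\theta)-\mathbbm{1}_{\{{\rm Bin}(m,\theta)\ge1\}}\bigr)\le(m\theta)^2.$$
   Context: $x_+=\max(x,0)$. *)

(* a Bin(m,theta) random variable is represented by its law,
   the binomial pmf on {0,...,m}; expectations/variances of functions of it
   are the corresponding finite sums. *)
From mathcomp Require Import all_boot all_order all_algebra.
Set Implicit Arguments. Unset Strict Implicit. Unset Printing Implicit Defensive.
Import Order.TTheory GRing.Theory Num.Theory.
Local Open Scope ring_scope.

Definition binom_pmf (R : realFieldType) (m : nat) (theta : R) (k : nat) : R :=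
  'C(m, k)%:R * theta ^+ k * (1 - theta) ^+ (m - k).

Definition binE (R : realFieldType) (m : nat) (theta : R) (f : nat -> R) : R :=
  \sum_(k < m.+1) binom_pmf m theta k * f k.

Definition binVar (R : realFieldType) (m : nat) (theta : R) (f : nat -> R) : R :=
  binE m theta (fun k => (f k - binE m theta f) ^+ 2).

Definition pos_part (R : realFieldType) (x : R) : R := Num.max x 0.

(* On {0,...,m} the function f(k) = k - 1{k >= 1} is (k - 1)_+, and f(k)^2 is
   at most the falling factorial k(k - 1).  Hence Var f(X) <= E[f(X)^2] is
   bounded by the second factorial moment E[X(X - 1)] = m(m - 1) theta^2 of
   X ~ Bin(m, theta), which comes from k(k - 1) C(m, k) = m(m - 1) C(m - 2, k - 2). *)
From mathcomp Require Import all_boot all_order all_algebra.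
From mathcomp Require Import ring.
(* Imported last so that [binE] denotes the binomial expectation, not the
   lemma [binomial.binE]. *)

Set Implicit Arguments.
Unset Strict Implicit.
Unset Printing Implicit Defensive.
Import Order.TTheory GRing.Theory Num.Theory.
Local Open Scope ring_scope.

Lemma ffact_mul_bin n k r :
  ((k + r) ^_ r * 'C(n + r, k + r) = (n + r) ^_ r * 'C(n, k))%N.
Proof.
elim: r => [|r IHr]; first by rewrite !addn0 !ffactn0.
rewrite !addnS !ffactSS -mulnA mulnCA -mul_bin_diag /= mulnCA IHr.
by rewrite mulnA.
Qed.

Section BinomialMoments.
Variables (R : realFieldType) (m : nat) (theta : R).

Lemma sum_binom_pmf : \sum_(k < m.+1) binom_pmf m theta k = 1.
Proof.
rewrite -(expr1n _ m) -{1}(subrK theta 1) exprDn.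
by apply: eq_bigr => k _; rewrite /binom_pmf mulr_natl mulrnAl mulrC.
Qed.

Lemma eq_binE (f g : nat -> R) : f =1 g -> binE m theta f = binE m theta g.
Proof. by move=> fg; apply: eq_bigr => k _; rewrite fg. Qed.

Lemma eq_binVar (f g : nat -> R) : f =1 g -> binVar m theta f = binVar m theta g.
Proof. by move=> fg; rewrite /binVar (eq_binE fg); apply: eq_binE => k; rewrite fg. Qed.

Lemma binVarE (f : nat -> R) :
  binVar m theta f = binE m theta (fun k => f k ^+ 2) - binE m theta f ^+ 2.
Proof.
rewrite /binVar; set c := binE m theta f.
have -> : binE m theta (fun k => (f k - c) ^+ 2) =
    binE m theta (fun k => f k ^+ 2) - c *+ 2 * c + c ^+ 2 * 1.
  rewrite -sum_binom_pmf /c /binE !mulr_sumr -sumrB -big_split /=.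
  by apply: eq_bigr => k _; ring.
ring.
Qed.

Lemma binVar_le_binE_sqr (f : nat -> R) :
  binVar m theta f <= binE m theta (fun k => f k ^+ 2).
Proof. by rewrite binVarE gerBl sqr_ge0. Qed.

Hypotheses (theta_ge0 : 0 <= theta) (theta_le1 : theta <= 1).

Lemma binom_pmf_ge0 k : 0 <= binom_pmf m theta k.
Proof. by rewrite /binom_pmf !mulr_ge0 ?exprn_ge0 ?ler0n ?subr_ge0. Qed.

Lemma ler_binE (f g : nat -> R) :
  (forall k, f k <= g k) -> binE m theta f <= binE m theta g.
Proof. by move=> fg; apply: ler_sum => k _; rewrite ler_wpM2l ?binom_pmf_ge0. Qed.

End BinomialMoments.

Lemma binE_ffact (R : realFieldType) (m r : nat) (theta : R) :
  binE m theta (fun k => (k ^_ r)%:R) = (m ^_ r)%:R * theta ^+ r.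
Proof.
have [ltmr | lerm] := ltnP m r.
  rewrite ffact_small // mul0r; apply: big1 => k _.
  by rewrite ffact_small ?mulr0 // (leq_ltn_trans (leq_ord k)).
rewrite -(subnK lerm); set n := (m - r)%N.
(* The terms with k < r vanish; the others are reindexed by k = j + r. *)
rewrite /binE -(big_mkord xpredT (fun k => binom_pmf (n + r) theta k * (k ^_ r)%:R)).
rewrite (@big_cat_nat _ _ _ r) ?leqW ?leq_addl //=.
rewrite big_nat big1 ?add0r => [|k /andP[_ ltkr]]; last by rewrite ffact_small ?mulr0.
rewrite -{1}(add0n r) big_addn -addSn addnK big_mkord.
transitivity (((n + r) ^_ r)%:R * theta ^+ r * \sum_(j < n.+1) binom_pmf n theta j);
  last by rewrite sum_binom_pmf mulr1.
rewrite mulr_sumr.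
apply: eq_bigr => j _; rewrite /binom_pmf subnDr exprD.
have ffE : ((j + r) ^_ r)%:R * 'C(n + r, j + r)%:R =
    ((n + r) ^_ r)%:R * 'C(n, j)%:R :> R.
  by rewrite -!natrM ffact_mul_bin.
transitivity (((j + r) ^_ r)%:R * 'C(n + r, j + r)%:R * theta ^+ j * theta ^+ r *
  (1 - theta) ^+ (n - j)); first ring.
by rewrite ffE; ring.
Qed.

Lemma ffact_leq_exp n r : (n ^_ r <= n ^ r)%N.
Proof.
by elim: r => // r IHr; rewrite ffactnSr expnSr leq_mul ?leq_subr.
Qed.

Lemma pos_part_natrB1 (R : realFieldType) k :
  pos_part (k%:R - 1 : R) = k%:R - (1 <= k)%N%:R.
Proof.
rewrite /pos_part; case: k => [|k] /=.
  by rewrite subrr sub0r; apply/max_idPr; rewrite lerN10.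
by apply/max_idPl; rewrite subr_ge0 ler1n.
Qed.

Lemma sqr_natrB_indicator_le_ffact (R : realFieldType) k :
  (k%:R - (1 <= k)%N%:R) ^+ 2 <= (k ^_ 2)%:R :> R.
Proof.
case: k => [|k] /=; first by rewrite subrr expr0n.
rewrite -addn1 natrD addrK -natrX ler_nat addn1 ffactSS ffactn1.
by rewrite -mulnn leq_mul2r leqnSn orbT.
Qed.

Theorem lemma6p4 (R : realFieldType) (m : nat) (theta : R)
  (h0 : 0 < theta) (h1 : theta < 1) :
  binVar m theta (fun k => pos_part (k%:R - 1)) =
    binVar m theta (fun k => k%:R - (1 <= k)%N%:R) /\
  binVar m theta (fun k => k%:R - (1 <= k)%N%:R) <= (m%:R * theta) ^+ 2.
Proof.
split; first exact/eq_binVar/pos_part_natrB1.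
apply: le_trans (binVar_le_binE_sqr _ _ _) _.
apply: le_trans (ler_binE m (ltW h0) (ltW h1) (@sqr_natrB_indicator_le_ffact R)) _.
rewrite binE_ffact exprMn ler_wpM2r ?sqr_ge0 //.
by rewrite -natrX ler_nat ffact_leq_exp.
Qed.
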